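(* Let $p$ be an odd prime, let $G$ be a finite $p$-group and let $N$ be a normal subgroup of $G$. If $N$ is powerful, then $\exp(N\wedge G)$ divides $\exp(N)$.
   Context: For odd $p$, a finite $p$-group $N$ is powerful if $[N,N]\subseteq N^p$, where $N^p$ is the subgroup generated by $p$-th powers. Conventions: ${}^g h = ghg^{-1}$, $[g,h]=ghg^{-1}h^{-1}$. For $N\trianglelefteq G$, the nonabelian tensor product $N\otimes G$ (with actions by conjugation) is the group generated by symbols $n\otimes g$ ($n\in N$, $g\in G$) subject to $nn'\otimes g=({}^n n'\otimes {}^n g)(n\otimes g)$ and $n\otimes gg'=(n\otimes g)({}^g n\otimes {}^g g')$; the exterior product $N\wedge G$ is its quotient by the subgroup generated by all $x\otimes x$, $x\in N$. *)

From mathcomp Require Import all_boot all_fingroup all_solvable.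
From mathcomp Require Import pgroup abelian commutator.
Set Implicit Arguments. Unset Strict Implicit. Unset Printing Implicit Defensive.
Local Open Scope group_scope.

Definition lconj (gT : finGroupType) (g h : gT) : gT := g * h * g^-1.

Definition ppow_subgroup (gT : finGroupType) (p : nat) (N : {set gT}) : {set gT} :=
  <<[set x ^+ p | x in N]>>.

Definition powerful (gT : finGroupType) (p : nat) (N : {set gT}) : Prop :=
  [~: N, N] \subset ppow_subgroup p N.

(* Words in the free group on symbols n (x) g: a letter (b,(n,g)) stands for
   (n (x) g) if b = false and (n (x) g)^-1 if b = true. *)
Definition letter (gT : finGroupType) := (bool * (gT * gT))%type.
Definition word (gT : finGroupType) := seq (letter gT).
Definition gen (gT : finGroupType) (n g : gT) : letter gT := (false, (n, g)).
Definition linv (gT : finGroupType) (l : letter gT) : letter gT := (~~ l.1, l.2).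

(* The congruence on words whose quotient is the nonabelian exterior product
   N /\ G: free-group cancellation, the two tensor relations for n,n' in N and
   g,g' in G, and the exterior relations x (x) x = 1 for x in N. *)
Inductive ext_eq (gT : finGroupType) (N G : {set gT}) : word gT -> word gT -> Prop :=
  | ext_refl u : ext_eq N G u u
  | ext_sym u v : ext_eq N G u v -> ext_eq N G v u
  | ext_trans u v w : ext_eq N G u v -> ext_eq N G v w -> ext_eq N G u w
  | ext_ctx a b u v : ext_eq N G u v -> ext_eq N G (a ++ u ++ b) (a ++ v ++ b)
  | ext_cancel l : ext_eq N G [:: l; linv l] [::]
  | ext_rel1 n n' g : n \in N -> n' \in N -> g \in G ->
      ext_eq N G [:: gen (n * n') g]
                 [:: gen (lconj n n') (lconj n g); gen n g]
  | ext_rel2 n g g' : n \in N -> g \in G -> g' \in G ->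
      ext_eq N G [:: gen n (g * g')]
                 [:: gen n g; gen (lconj g n) (lconj g g')]
  | ext_diag x : x \in N -> ext_eq N G [:: gen x x] [::].

Definition ext_word (gT : finGroupType) (N G : {set gT}) (w : word gT) : bool :=
  all (fun l : letter gT => (l.2.1 \in N) && (l.2.2 \in G)) w.

Definition ext_exp_dvd (gT : finGroupType) (N G : {set gT}) (e : nat) : Prop :=
  forall w : word gT, ext_word N G w -> ext_eq N G (flatten (nseq e w)) [::].

From mathcomp Require Import all_boot all_fingroup all_solvable.
From mathcomp Require Import pgroup abelian commutator.
From Stdlib Require Import Setoid Morphisms.
Set Implicit Arguments. Unset Strict Implicit. Unset Printing Implicit Defensive.
Local Open Scope group_scope.

(* Put N_0 = N and N_(i+1) = N_i^p.  For p odd each N_i is powerful, and every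
   element of N_i^p is a p-th power of an element of N_i (Lubotzky-Mann), so
   N_k = 1 when p^k = exp N.
   Work in N /\ G modulo the symbols b /\ g with b in N_(i+1).  Two words u, v
   over N_i commute up to [v] /\ [u], where [w] in N_i is the commutator image
   of w; since N_i^p and [N_i, N_i] lie in N_(i+1), these correction terms are
   central of exponent p, and each a /\ g with a in N_i has exponent p.  As p
   divides C(p, 2), the Hall-Petrescu formula in class two kills the p-th power
   of every word over N_i.  By the Peiffer identity a word that is trivial
   modulo the N_(i+1)-symbols equals a word over N_(i+1).  Hence the p^i-th
   power of every element of N /\ G is a word over N_i, and its exp N-th power
   is a word over N_k = 1. *)

Lemma expMg_class2_odd (gT : finGroupType) (p : nat) (x y : gT) : odd p ->
  commute x [~ x, y] -> commute y [~ x, y] -> [~ x, y] ^+ p = 1 ->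
  (y * x) ^+ p = y ^+ p * x ^+ p.
Proof. by move=> p_odd cx cy Ep; rewrite expMg_Rmul // bin2odd // expgM Ep expg1n mulg1. Qed.

(** * Powerful p-groups *)

Section PowerSubgroup.
Variables (gT : finGroupType) (p : nat).
Implicit Types (A B : {set gT}) (G H W X : {group gT}).

Lemma ppow_subgroup_group A : group_set (ppow_subgroup p A).
Proof. exact: groupP. Qed.
Canonical ppow_group A := Group (ppow_subgroup_group A).

Lemma mem_ppow A x : x \in A -> x ^+ p \in ppow_subgroup p A.
Proof. by move=> xA; apply/mem_gen/imset_f. Qed.

Lemma ppow_sub H : ppow_subgroup p H \subset H.
Proof. by rewrite gen_subG; apply/subsetP=> _ /imsetP[x xH ->]; rewrite groupX. Qed.

Lemma ppowS A B : A \subset B -> ppow_subgroup p A \subset ppow_subgroup p B.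
Proof. by move=> sAB; rewrite genS ?imsetS. Qed.

Lemma ppow_norms A B : B \subset 'N(A) -> B \subset 'N(ppow_subgroup p A).
Proof.
move=> nAB; apply: norms_gen; apply/subsetP=> g gB; rewrite inE.
apply/subsetP=> _ /imsetP[_ /imsetP[x xA ->] ->].
by rewrite conjXg; apply: imset_f; rewrite memJ_norm ?(subsetP nAB).
Qed.

Lemma ppow_normal H G : H <| G -> ppow_subgroup p H <| G.
Proof.
by case/andP=> sHG nHG; rewrite /normal (subset_trans (ppow_sub H)) ?ppow_norms.
Qed.

Lemma ppow_sub_Phi H : p.-group H -> ppow_subgroup p H \subset 'Phi(H).
Proof. by move=> pH; rewrite (Phi_joing pH) (MhoE 1 pH) expn1 joing_subr. Qed.

Lemma nil_sub_mulR H X W : nilpotent H -> X \subset H -> H \subset 'N(X) ->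
  W <| H -> X \subset W * [~: X, H] -> X \subset W.
Proof.
move=> nilH sXH nXH /andP[sWH nWH] sX_WXH.
have nWX : X \subset 'N(W) by apply: subset_trans nWH.
rewrite -quotient_sub1 //; apply/trivgP/eqP; apply: contraT => ntXW.
have sXW_XHW : X / W \subset [~: X / W, H / W].
  by rewrite -quotientR // -(quotientMidl W [~: X, H]) quotientS.
have nXHW : H / W \subset 'N_(H / W)(X / W) by rewrite subsetI subxx quotient_norms.
have ltXHW := nil_comm_properl (quotient_nil W nilH) (quotientS W sXH) ntXW nXHW.
by have := sub_proper_trans sXW_XHW ltXHW; rewrite properxx.
Qed.

Section OddPower.
Hypothesis p_odd : odd p.

Section Powerful.
Variable H : {group gT}.
Hypotheses (nilH : nilpotent H) (powH : powerful p H).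
Let P := ppow_group H.
Let W := ppow_group P.

Let nPH : P <| H. Proof. exact: ppow_normal (normal_refl H). Qed.
Let nWH : W <| H. Proof. exact: ppow_normal nPH. Qed.
Let nWH' h : h \in H -> h \in 'N(W). Proof. exact: subsetP (normal_norm nWH) h. Qed.

(* Modulo the right-hand side [~: P, H] is central in H, whence
   (x^p)^g = (x [~ x, g])^p = x^p [~ x, g]^p = x^p. *)
Lemma commg_ppow_subJ : [~: P, H] \subset W <*> [~: [~: P, H], H].
Proof.
have [sPH nPH'] := andP nPH.
set X := [~: P, H]; set K := (W <*> [~: X, H])%G.
have sXH : X \subset H by rewrite commg_subr (subset_trans sPH (normG H)).
have nKH : H \subset 'N(K) by rewrite normsY ?normsR ?normal_norm.
have nK h : h \in H -> h \in 'N(K) by apply: (subsetP nKH).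
have cXH z h : z \in X -> h \in H -> commute (coset K z) (coset K h).
  move=> zX hH; apply/commgP; rewrite -morphR ?nK ?(subsetP sXH z zX) //.
  by apply/eqP/coset_id/mem_gen/setUP; right; apply: mem_commg.
change (X \subset K); rewrite -quotient_cents2 ?(subset_trans sPH nKH) //.
have sXpH : [set x ^+ p | x in H] \subset H by rewrite -gen_subG ppow_sub.
rewrite quotient_gen ?(subset_trans sXpH nKH) // gen_subG.
apply/subsetP=> _ /morphimP[_ _ /imsetP[x xH ->] ->].
apply/centP=> _ /morphimP[g _ gH ->]; apply/commgP/conjg_fixP.
have xgP : [~ x, g] \in P by rewrite (subsetP powH) ?mem_commg.
have xgH : [~ x, g] \in H := subsetP sPH _ xgP.
rewrite morphX ?nK // conjXg conjg_mulR -morphR ?nK //.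
set c := coset K [~ x, g]; have c_p : c ^+ p = 1.
  by rewrite /c -morphX ?nK //; apply/coset_id/mem_gen/setUP; left; apply: mem_ppow.
have cxc : [~ c, coset K x] = coset K [~ [~ x, g], x] by rewrite morphR ?nK.
have ccx : commute c [~ c, coset K x].
  by rewrite cxc; apply/commute_sym/cXH; rewrite ?mem_commg.
rewrite expMg_class2_odd ?c_p ?mulg1 // cxc.
- by apply/commute_sym/cXH; rewrite ?mem_commg.
- by rewrite -cxc -commXg // c_p comm1g.
Qed.

Lemma commg_ppow_sub : [~: P, H] \subset W.
Proof.
have [sPH _] := andP nPH; have [_ nWH''] := andP nWH.
have sXH : [~: P, H] \subset H by rewrite commg_subr (subset_trans sPH (normG H)).
apply: (nil_sub_mulR nilH sXH (normsR _ _) nWH) => //; first exact: normal_norm.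
rewrite -norm_joinEr ?commg_ppow_subJ // (subset_trans _ nWH'') //.
by rewrite commg_subr (subset_trans sXH (normG H)).
Qed.

Lemma powerful_ppow : powerful p P.
Proof. exact: subset_trans (commgS _ (ppow_sub H)) commg_ppow_sub. Qed.

Lemma expgMn_mod_ppow2 a b : a \in H -> b \in H ->
  coset W ((b * a) ^+ p) = coset W (b ^+ p * a ^+ p).
Proof.
move=> aH bH; have [sPH _] := andP nPH.
have abP : [~ a, b] \in P by rewrite (subsetP powH) ?mem_commg.
have cab u : u \in H -> commute (coset W u) [~ coset W a, coset W b].
  move=> uH; apply/commute_sym/commgP; rewrite -!morphR ?nWH' ?groupR //.
  by apply/eqP/coset_id; rewrite (subsetP commg_ppow_sub) ?mem_commg.
have ab_p : [~ coset W a, coset W b] ^+ p = 1.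
  by rewrite -morphR ?nWH' // -morphX ?nWH' ?groupR //; apply/coset_id/mem_ppow.
rewrite morphX ?nWH' ?groupM // !morphM ?nWH' ?groupX // !morphX ?nWH' //.
by apply: expMg_class2_odd; [| exact: cab | exact: cab | exact: ab_p].
Qed.

(* Modulo W the p-th powers of elements of H form a subgroup, which contains P. *)
Lemma ppow_expg_mul y : y \in P ->
  exists2 z, z \in H & exists2 w, w \in W & y = z ^+ p * w.
Proof.
move=> yP; have [sPH _] := andP nPH.
have groupT : group_set [set coset W (z ^+ p) | z in H].
  apply/group_setP; split; first by apply/imsetP; exists 1; rewrite ?expg1n ?morph1.
  move=> _ _ /imsetP[a aH ->] /imsetP[b bH ->]; apply/imsetP.
  exists (a * b); first by rewrite groupM.
  by rewrite expgMn_mod_ppow2 // morphM ?nWH' ?groupX.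
have sPT : P \subset coset W @*^-1 (Group groupT).
  rewrite gen_subG; apply/subsetP=> _ /imsetP[z zH ->].
  by apply/morphpreP; split; rewrite ?nWH' ?groupX //; apply/imsetP; exists z.
have /morphpreP[yNW /imsetP[z zH Ez]] := subsetP sPT y yP.
exists z => //; exists ((z ^+ p)^-1 * y); last by rewrite mulKVg.
have yH := subsetP sPH y yP.
apply: coset_idr; first by rewrite groupM ?groupV ?nWH' ?groupX.
by rewrite morphM ?morphV ?groupV ?nWH' ?groupX //= -Ez mulVg.
Qed.

Lemma powerful_join_cycle z : z \in H -> powerful p (<[z]> <*> P).
Proof.
move=> zH; have [sPH nPH'] := andP nPH; set L := [~: P, H].
have nLH : H \subset 'N(L) by rewrite normsR.
have nzL : <[z]> \subset 'N(L) by rewrite cycle_subG (subsetP nLH).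
have nPL : P \subset 'N(L) := subset_trans sPH nLH.
apply: subset_trans (ppowS (joing_subr _ _)).
apply: subset_trans commg_ppow_sub.
rewrite -derg1; apply: der1_min (subset_trans _ nLH) _.
  by rewrite join_subG cycle_subG zH.
rewrite /= norm_joinEl ?cycle_subG ?(subsetP nPH') // quotientMl //.
rewrite abelianM quotient_abelian ?cycle_abelian //=.
rewrite quotient_cents2 // ?commgS ?cycle_subG //=.
by rewrite /abelian quotient_cents2 // commgS.
Qed.

End Powerful.

Lemma cycle_join_ppow_eq H (z : gT) : p.-group H ->
  <[z]> <*> ppow_subgroup p H = H -> <[z]> = H.
Proof.
move=> pH defH; rewrite -[LHS]genGid; apply: Phi_nongen.
have szH : <[z]> \subset H by rewrite -{1}defH joing_subl.
apply/eqP; rewrite eqEsubset join_subG Phi_sub szH /= -{1}defH joingC.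
by rewrite genS // setSU // ppow_sub_Phi.
Qed.

Lemma mem_ppow_cycle (z y : gT) : y \in ppow_subgroup p <[z]> -> exists j, y = (z ^+ j) ^+ p.
Proof.
have: ppow_subgroup p <[z]> \subset <[z ^+ p]>.
  rewrite gen_subG; apply/subsetP=> _ /imsetP[_ /cycleP[i ->] ->].
  by rewrite expgAC mem_cycle.
by move=> /subsetP sPz /sPz /cycleP[j ->]; exists j; rewrite expgAC.
Qed.

(* Write y = z^p w with w in (H^p)^p; either <[z]> H^p = H is cyclic since
   H^p <= 'Phi(H), or y lies in the smaller powerful group <[z]> H^p. *)
Lemma powerful_ppow_expg H y : p.-group H -> powerful p H ->
  y \in ppow_subgroup p H -> exists2 x, x \in H & y = x ^+ p.
Proof.
elim: {H}_.+1 {-2}H (ltnSn #|H|) y => // n IHn H leHn y pH powH yP.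
have nilH := pgroup_nil pH.
have [z zH [w wW ->]] := ppow_expg_mul nilH powH yP.
set M := (<[z]> <*> ppow_subgroup p H)%G.
have sMH : M \subset H by rewrite join_subG cycle_subG zH ppow_sub.
have [defH | neMH] := eqVneq (M : {set gT}) H.
  have yz : z ^+ p * w \in ppow_subgroup p <[z]>.
    by rewrite (cycle_join_ppow_eq pH defH) groupM ?mem_ppow // (subsetP (ppow_sub _)).
  by have [j ->] := mem_ppow_cycle yz; exists (z ^+ j); rewrite ?groupX.
have ltMH : #|M| < #|H| by rewrite proper_card // properEneq neMH.
have zM : z \in M by rewrite (subsetP (joing_subl _ _)) ?cycle_id.
have yM : z ^+ p * w \in ppow_subgroup p M.
  by rewrite groupM ?mem_ppow // (subsetP (ppowS (joing_subr _ _))).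
have [x xM ->] := IHn M (leq_trans ltMH leHn) _ (pgroupS sMH pH)
  (powerful_join_cycle nilH powH zH) yM.
by exists x; rewrite ?(subsetP sMH).
Qed.

End OddPower.

End PowerSubgroup.

Section PowerSeries.
Variables (gT : finGroupType) (p : nat) (H : {group gT}).

Fixpoint ppow_series i : {group gT} :=
  if i is i.+1 then ppow_group p (ppow_series i) else H.

Lemma ppow_series_sub i : ppow_series i \subset H.
Proof. by elim: i => //= i sHiH; apply: subset_trans sHiH; apply: ppow_sub. Qed.

Lemma ppow_series_normal (G : {group gT}) i : H <| G -> ppow_series i <| G.
Proof. by move=> nHG; elim: i => //= i nHiG; apply: ppow_normal. Qed.

Hypotheses (p_odd : odd p) (pH : p.-group H) (powH : powerful p H).

Lemma ppow_series_powerful i : powerful p (ppow_series i).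
Proof.
elim: i => //= i powHi.
exact/powerful_ppow/powHi/pgroup_nil/(pgroupS (ppow_series_sub i) pH).
Qed.

Lemma mem_ppow_series i y : y \in ppow_series i -> exists2 x, x \in H & y = x ^+ (p ^ i).
Proof.
elim: i y => [|i IHi] y /=; first by exists y; rewrite ?expg1.
have pHi := pgroupS (ppow_series_sub i) pH.
case/(powerful_ppow_expg p_odd pHi (ppow_series_powerful i)) => z /IHi[x xH ->] ->.
by exists x; rewrite // -expgM expnSr.
Qed.

Lemma ppow_series_exponent : ppow_series (logn p (exponent H)) :=: 1.
Proof.
apply/trivgP/subsetP=> _ /mem_ppow_series[x xH ->].
by rewrite -p_part part_pnat_id ?pnat_exponent // expg_exponent ?inE.
Qed.

End PowerSeries.

(** * Words in the nonabelian exterior product *)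

Ltac gnorm := rewrite /lconj ?invMg ?invgK -?mulgA;
  repeat progress rewrite ?mulKg ?mulKVg ?mulgV ?mulVg ?mulg1 ?mul1g ?invg1.

Section Words.
Variable gT : finGroupType.
Implicit Types (x y n g : gT) (l : letter gT) (u v w : word gT) (A B : {set gT}).

Definition winv w : word gT := rev (map (@linv gT) w).
Definition wedge n g : word gT := [:: gen n g].
Definition wedgeV n g : word gT := [:: linv (gen n g)].
Definition wpow w k : word gT := flatten (nseq k w).

Definition lconj_letter x l : letter gT := (l.1, (lconj x l.2.1, lconj x l.2.2)).
Definition wconj x w := map (lconj_letter x) w.

(* The paper's commutator; mathcomp's [~ x, y] is x^-1 y^-1 x y. *)
Definition lcomm x y := x * y * x^-1 * y^-1.
Definition lcomm_letter l := if l.1 then (lcomm l.2.1 l.2.2)^-1 else lcomm l.2.1 l.2.2.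
(* The commutator map N /\ G -> [N, G], n /\ g |-> [n, g], on words. *)
Definition wcomm w := \prod_(l <- w) lcomm_letter l.

Lemma linvK : involutive (@linv gT). Proof. by case=> [[] [? ?]]. Qed.

Lemma winv_cat u v : winv (u ++ v) = winv v ++ winv u.
Proof. by rewrite /winv map_cat rev_cat. Qed.

Lemma winvK : involutive winv.
Proof. by move=> w; rewrite /winv map_rev -map_comp revK (eq_map linvK) map_id. Qed.

Lemma winv_cons l w : winv (l :: w) = winv w ++ [:: linv l].
Proof. by rewrite /winv /= rev_cons cats1. Qed.

Lemma wpowS w k : wpow w k.+1 = w ++ wpow w k. Proof. by []. Qed.

Lemma wpowD w j k : wpow w (j + k) = wpow w j ++ wpow w k.
Proof. by elim: j => // j IHj; rewrite addSn !wpowS IHj catA. Qed.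

Lemma wpowSr w k : wpow w k.+1 = wpow w k ++ w.
Proof. by rewrite -addn1 wpowD wpowS cats0. Qed.

Lemma wpowM w j k : wpow w (j * k) = wpow (wpow w j) k.
Proof. by elim: k => [|k IHk]; rewrite ?muln0 // mulnS wpowD IHk. Qed.

Lemma wpow_nil k : wpow [::] k = [::].
Proof. by elim: k. Qed.

Lemma winv_wpow w k : winv (wpow w k) = wpow (winv w) k.
Proof. by elim: k => // k IHk; rewrite wpowS winv_cat IHk -wpowSr. Qed.

Lemma lconj1 x : lconj 1 x = x. Proof. by gnorm. Qed.
Lemma lconjM x y z : lconj (x * y) z = lconj x (lconj y z). Proof. by gnorm. Qed.
Lemma lconjE x y : lconj x y = y ^ x^-1. Proof. by rewrite conjgE invgK /lconj mulgA. Qed.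

Lemma mem_lconj A x y : x \in 'N(A) -> y \in A -> lconj x y \in A.
Proof. by move=> nAx yA; rewrite lconjE memJ_norm ?groupV. Qed.

Lemma mem_lcomm (H : {group gT}) x y : x \in H -> y \in 'N(H) -> lcomm x y \in H.
Proof.
move=> xH nHy; have -> : lcomm x y = x * lconj y x^-1 by rewrite /lcomm /lconj !mulgA.
by rewrite groupM ?mem_lconj ?groupV.
Qed.

Lemma wconj_cat x u v : wconj x (u ++ v) = wconj x u ++ wconj x v.
Proof. exact: map_cat. Qed.

Lemma wconj1 w : wconj 1 w = w.
Proof.
by rewrite /wconj (eq_map (g := id)) ?map_id // => -[b [n g]]; rewrite /lconj_letter /= !lconj1.
Qed.

Lemma wconjM x y w : wconj (x * y) w = wconj x (wconj y w).
Proof. by rewrite /wconj -map_comp; apply: eq_map => l; rewrite /lconj_letter /= !lconjM. Qed.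

Lemma wconj_winv x w : wconj x (winv w) = winv (wconj x w).
Proof. by rewrite /wconj /winv map_rev -!map_comp. Qed.

Lemma wconj_wpow x w k : wconj x (wpow w k) = wpow (wconj x w) k.
Proof. by elim: k => // k IHk; rewrite wpowS wconj_cat IHk. Qed.

Lemma wcomm_cat u v : wcomm (u ++ v) = wcomm u * wcomm v.
Proof. exact: big_cat. Qed.

Lemma wcomm_wedge n g : wcomm (wedge n g) = lcomm n g.
Proof. by rewrite /wcomm big_seq1. Qed.

Lemma wcomm_wedgeV n g : wcomm (wedgeV n g) = (lcomm n g)^-1.
Proof. by rewrite /wcomm big_seq1. Qed.

Lemma ext_word_cat A B u v : ext_word A B (u ++ v) = ext_word A B u && ext_word A B v.
Proof. exact: all_cat. Qed.

Lemma ext_word_wedge A B n g : ext_word A B (wedge n g) = (n \in A) && (g \in B).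
Proof. by rewrite /ext_word /= andbT. Qed.

Lemma ext_word_wedgeV A B n g : ext_word A B (wedgeV n g) = (n \in A) && (g \in B).
Proof. by rewrite /ext_word /= andbT. Qed.

Lemma ext_word_winv A B w : ext_word A B (winv w) = ext_word A B w.
Proof. by rewrite /ext_word /winv all_rev all_map; apply: eq_all => -[b [n g]]. Qed.

Lemma ext_word_wconj A B x w : x \in 'N(A) -> x \in 'N(B) ->
  ext_word A B w -> ext_word A B (wconj x w).
Proof.
move=> nAx nBx; rewrite /ext_word all_map => /allP Aw; apply/allP=> l /Aw /andP[nA gB].
by rewrite /= !mem_lconj.
Qed.

Lemma ext_word_wpow A B w k : ext_word A B w -> ext_word A B (wpow w k).
Proof. by move=> Aw; elim: k => // k IHk; rewrite wpowS ext_word_cat Aw. Qed.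

Lemma ext_wordS A A' B w : A \subset A' -> ext_word A B w -> ext_word A' B w.
Proof.
by move=> sAA' /allP Aw; apply/allP=> l /Aw /andP[nA gB]; rewrite (subsetP sAA') ?gB.
Qed.

Lemma mem_wcomm (H K : {group gT}) w : K \subset 'N(H) -> ext_word H K w -> wcomm w \in H.
Proof.
move=> nHK; elim: w => [|[b [n g]] w IHw]; first by rewrite /wcomm big_nil group1.
rewrite /ext_word /= => /andP[/andP[nH gK] Hw].
rewrite /wcomm big_cons groupM ?IHw // /lcomm_letter.
by case: b; rewrite ?groupV mem_lcomm ?(subsetP nHK).
Qed.

End Words.
Section ExteriorRelations.
Variables (gT : finGroupType) (N G : {group gT}).
Hypothesis nNG : N <| G.
Implicit Types (x y n g : gT) (l : letter gT) (s u v w : word gT).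

Local Notation "u =e= v" := (ext_eq N G u v) (at level 70).

Let sNG : N \subset G := normal_sub nNG.
Let nNG' : G \subset 'N(N) := normal_norm nNG.
Let inNG n : n \in N -> n \in G := subsetP sNG n.
Let lconjN x n : x \in G -> n \in N -> lconj x n \in N.
Proof. by move=> xG; apply/mem_lconj/(subsetP nNG'). Qed.
Let lconjG x g : x \in G -> g \in G -> lconj x g \in G.
Proof. by move=> xG; apply/mem_lconj/(subsetP (normG G)). Qed.
Let lcommN n g : n \in N -> g \in G -> lcomm n g \in N.
Proof. by move=> nN gG; apply/mem_lcomm/(subsetP nNG'). Qed.

Let wcommN w : ext_word N G w -> wcomm w \in N := mem_wcomm nNG'.

Ltac group_mem := match goal with |- is_true (_ \in _) =>
  first [ done | (apply: lconjN; group_mem) | (apply: lconjG; group_mem)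
        | (apply: lcommN; group_mem) | (apply: wcommN; done) | (apply: groupM; group_mem)
        | (apply: groupVr; group_mem) | (apply: groupX; group_mem)
        | (apply: inNG; group_mem) ] end.
Ltac side := first [ group_mem | (gnorm; done) | done ].

#[local] Hint Resolve ext_refl : core.

#[local] Instance ext_eq_equiv : Equivalence (ext_eq N G).
Proof. split; [exact: ext_refl | exact: ext_sym | exact: ext_trans]. Qed.

#[local] Instance ext_cat_proper :
  Proper (ext_eq N G ==> ext_eq N G ==> ext_eq N G) (@cat (letter gT)).
Proof.
move=> u u' Eu v v' Ev; transitivity (u' ++ v); first exact: (ext_ctx [::] v Eu).
by have := ext_ctx u' [::] Ev; rewrite !cats0.
Qed.

Lemma ext_winv_r w : w ++ winv w =e= [::].
Proof.
elim: w => [|l w IHw] //; rewrite winv_cons -cat1s -catA (catA w) IHw.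
exact: ext_cancel.
Qed.

Lemma ext_winv_l w : winv w ++ w =e= [::].
Proof. by have := ext_winv_r (winv w); rewrite winvK. Qed.

Lemma ext_winv u v : u =e= v -> winv u =e= winv v.
Proof.
move=> Euv; transitivity (winv u ++ (v ++ winv v)); first by rewrite ext_winv_r cats0.
by rewrite -{1}Euv catA ext_winv_l.
Qed.

Lemma ext_cancel_l s u v : s ++ u =e= s ++ v -> u =e= v.
Proof. by move=> E; rewrite -[u]cat0s -[v]cat0s -(ext_winv_l s) -!catA E. Qed.

Lemma ext_cancel_r s u v : u ++ s =e= v ++ s -> u =e= v.
Proof. by move=> E; rewrite -[u]cats0 -[v]cats0 -(ext_winv_r s) !catA E. Qed.

Lemma ext_move_r u v w : u ++ v =e= w -> u =e= w ++ winv v.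
Proof. by move=> <-; rewrite -catA ext_winv_r cats0. Qed.

Lemma ext_move_l u v w : u ++ v =e= w -> v =e= winv u ++ w.
Proof. by move=> <-; rewrite catA ext_winv_l. Qed.

Lemma ext_conj_winv s u v : s ++ u =e= v ++ s -> s ++ winv u =e= winv v ++ s.
Proof.
move=> E; apply: (@ext_cancel_l v); rewrite catA -E -catA ext_winv_r cats0.
by rewrite catA ext_winv_r.
Qed.

Lemma ext_conjV s u v : s ++ u =e= v ++ s -> winv s ++ v =e= u ++ winv s.
Proof.
move=> E; apply: (@ext_cancel_l s); rewrite catA ext_winv_r /= catA E.
by rewrite -catA ext_winv_r cats0.
Qed.

Lemma ext_wedgeV_r n g : wedge n g ++ wedgeV n g =e= [::].
Proof. exact: ext_cancel. Qed.

Lemma ext_wedgeV_l n g : wedgeV n g ++ wedge n g =e= [::].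
Proof. exact: ext_winv_l (wedge n g). Qed.

Lemma ext_wedgeMl m n n' g b c : n \in N -> n' \in N -> g \in G ->
  m = n * n' -> b = lconj n n' -> c = lconj n g -> wedge m g =e= wedge b c ++ wedge n g.
Proof. by move=> nN n'N gG -> -> ->; apply: ext_rel1. Qed.

Lemma ext_wedgeMr n h g g' b c : n \in N -> g \in G -> g' \in G ->
  h = g * g' -> b = lconj g n -> c = lconj g g' -> wedge n h =e= wedge n g ++ wedge b c.
Proof. by move=> nN gG g'G -> -> ->; apply: ext_rel2. Qed.

Lemma ext_wedgexx n : n \in N -> wedge n n =e= [::].
Proof. exact: ext_diag. Qed.

Lemma ext_wedge1g g : g \in G -> wedge 1 g =e= [::].
Proof.
move=> gG; apply: (@ext_cancel_l (wedge 1 g)); rewrite cats0.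
by symmetry; apply: (@ext_wedgeMl _ 1 1); side.
Qed.

Lemma ext_wedgeg1 n : n \in N -> wedge n 1 =e= [::].
Proof.
move=> nN; apply: (@ext_cancel_l (wedge n 1)); rewrite cats0.
by symmetry; apply: (@ext_wedgeMr _ _ 1 1); side.
Qed.

Lemma ext_wconj x u v : x \in G -> u =e= v -> wconj x u =e= wconj x v.
Proof.
move=> xG; elim=> {u v} //.
- by move=> u v _ E; symmetry.
- by move=> u v w _ E1 _ E2; rewrite E1 E2.
- by move=> a b u v _ E; rewrite !wconj_cat E.
- by move=> l; apply: ext_cancel.
- move=> n n' g nN n'N gG.
  by apply: (@ext_wedgeMl _ (lconj x n) (lconj x n')); side.
- move=> n g g' nN gG g'G.
  by apply: (@ext_wedgeMr _ _ (lconj x g) (lconj x g')); side.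
- by move=> n nN; apply: ext_wedgexx; side.
Qed.

Lemma ext_wedge_conj_swap m h n g : m \in N -> h \in G -> n \in N -> g \in G ->
  wedge m h ++ wconj (h * m) (wedge n g) =e= wconj (m * h) (wedge n g) ++ wedge m h.
Proof.
move=> mN hG nN gG.
have E1 : wedge (m * n) (h * g) =e= wedge (lconj m n) (lconj m h) ++
    (wconj (m * h) (wedge n g) ++ (wedge m h ++ wedge (lconj h m) (lconj h g))).
  transitivity (wedge (lconj m n) (lconj m (h * g)) ++ wedge m (h * g)).
    by apply: (@ext_wedgeMl _ m n); side.
  rewrite catA; apply: ext_cat_proper.
    by apply: (@ext_wedgeMr _ _ (lconj m h) (lconj m g)); side.
  by apply: (@ext_wedgeMr _ _ h g); side.
have E2 : wedge (m * n) (h * g) =e= wedge (lconj m n) (lconj m h) ++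
    (wedge m h ++ (wconj (h * m) (wedge n g) ++ wedge (lconj h m) (lconj h g))).
  transitivity (wedge (m * n) h ++ wedge (lconj h (m * n)) (lconj h g)).
    by apply: (@ext_wedgeMr _ _ h g); side.
  rewrite catA; apply: ext_cat_proper.
    by apply: (@ext_wedgeMl _ m n); side.
  by apply: (@ext_wedgeMl _ (lconj h m) (lconj h n)); side.
apply: (@ext_cancel_l (wedge (lconj m n) (lconj m h))).
apply: (@ext_cancel_r (wedge (lconj h m) (lconj h g))).
by rewrite -!catA -E2 -E1.
Qed.

Lemma ext_wedge_peiffer m h n g : m \in N -> h \in G -> n \in N -> g \in G ->
  wedge m h ++ wedge n g =e= wconj (lcomm m h) (wedge n g) ++ wedge m h.
Proof.
move=> mN hG nN gG; set x := (h * m)^-1.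
have := @ext_wedge_conj_swap m h (lconj x n) (lconj x g).
rewrite -[wedge (lconj x _) _]/(wconj x (wedge n g)) -!wconjM mulgV wconj1.
have -> : m * h * x = lcomm m h by rewrite /x /lcomm; gnorm.
by apply; side.
Qed.

Lemma ext_wedge_peifferw m h w : m \in N -> h \in G -> ext_word N G w ->
  wedge m h ++ w =e= wconj (lcomm m h) w ++ wedge m h.
Proof.
move=> mN hG; elim: w => [|[b [n g]] w IHw]; first by rewrite cats0.
move=> /andP[/andP[nN gG] /IHw{}IHw]; rewrite /= in nN gG.
rewrite -[_ :: w]cat1s wconj_cat catA.
have E1 : wedge m h ++ [:: (b, (n, g))] =e= wconj (lcomm m h) [:: (b, (n, g))] ++ wedge m h.
  case: b; last exact: ext_wedge_peiffer.
  by apply: (ext_conj_winv (u := wedge n g) (v := wconj (lcomm m h) (wedge n g)));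
    apply: ext_wedge_peiffer.
by rewrite E1 -catA IHw catA.
Qed.

Lemma ext_wedgeV_peifferw m h w : m \in N -> h \in G -> ext_word N G w ->
  wedgeV m h ++ w =e= wconj (lcomm m h)^-1 w ++ wedgeV m h.
Proof.
move=> mN hG Nw; apply: (ext_conjV (s := wedge m h)).
rewrite ext_wedge_peifferw -?wconjM ?mulgV ?wconj1 //.
by rewrite ext_word_wconj ?(subsetP nNG') ?(subsetP (normG G)) //; side.
Qed.

Lemma ext_peiffer u w : ext_word N G u -> ext_word N G w ->
  u ++ w =e= wconj (wcomm u) w ++ u.
Proof.
elim: u => [|[b [m h]] u IHu] Nu Nw; first by rewrite /wcomm big_nil wconj1 cats0.
case/andP: Nu => /andP[mN hG] Nu; rewrite /= in mN hG.
rewrite -[_ :: u]cat1s -catA IHu // catA wcomm_cat wconjM.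
have Nw' : ext_word N G (wconj (wcomm u) w).
  by rewrite ext_word_wconj ?(subsetP nNG') ?(subsetP (normG G)) //; side.
case: b.
  by rewrite (ext_wedgeV_peifferw mN hG Nw') wcomm_wedgeV -catA.
by rewrite (ext_wedge_peifferw mN hG Nw') wcomm_wedge -catA.
Qed.

Lemma ext_wedge_antisym a b : a \in N -> b \in N -> wedge a b ++ wedge b a =e= [::].
Proof.
move=> aN bN; set y := lconj b^-1 a.
have yN : y \in N by side.
have bb : lconj b b = b by gnorm.
have E1 : wedge (b * y) (b * y) =e= wconj b (wedge y (b * y)) ++ wedge b (b * y).
  by apply: (@ext_wedgeMl _ b y); side.
have E2 : wedge b (b * y) =e= wedge b (lconj b y).
  transitivity (wedge b b ++ wedge (lconj b b) (lconj b y)).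
    by apply: (@ext_wedgeMr _ _ b y); side.
  by rewrite ext_wedgexx // bb.
have E3 : wedge y (b * y) =e= wedge y b.
  transitivity (wedge y b ++ wedge (lconj b y) (lconj b y)).
    by apply: (@ext_wedgeMr _ _ b y); side.
  by rewrite ext_wedgexx ?cats0 //; side.
rewrite (ext_wconj _ E3) ?E2 ?ext_wedgexx in E1; try side.
have -> : a = lconj b y by rewrite /y; gnorm.
have -> : wedge (lconj b y) b = wconj b (wedge y b).
  by change (wedge (lconj b y) b = wedge (lconj b y) (lconj b b)); rewrite bb.
by rewrite -E1.
Qed.

Lemma ext_wedge_swap a b : a \in N -> b \in N -> wedge a b =e= wedgeV b a.
Proof. by move=> aN bN; apply: ext_move_r (ext_wedge_antisym aN bN). Qed.

Lemma ext_wedgeVn m g : m \in N -> g \in G -> wedge m^-1 (lconj m g) =e= wedgeV m g.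
Proof.
move=> mN gG; apply: (@ext_cancel_r (wedge m g)); rewrite ext_wedgeV_l.
rewrite -(ext_wedge1g gG); symmetry.
by apply: (@ext_wedgeMl _ m m^-1); side.
Qed.

Lemma ext_wedge_lcomml m h g : m \in N -> h \in G -> g \in G ->
  wedge (lcomm m h) g =e= wedge m h ++ wconj g (wedgeV m h).
Proof.
move=> mN hG gG; set k := lcomm m h; set g1 := lconj (m * h)^-1 (lconj m g).
have E1 : wedge k g =e= wedge (lconj m (lconj h m^-1)) (lconj m g) ++ wedge m g.
  by apply: (@ext_wedgeMl _ m (lconj h m^-1)); rewrite /k /lcomm; side.
have E2 : wedge (lconj m (lconj h m^-1)) (lconj m g) = wconj (m * h) (wedge m^-1 g1).
  by congr (wedge _ _); rewrite /g1; gnorm.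
have E3 : wedge m^-1 g1 =e= wedgeV m (lconj m^-1 g1).
  by rewrite -ext_wedgeVn -?lconjM ?mulgV ?lconj1 //; rewrite /g1; side.
have E4 : wconj (m * h) (wedgeV m (lconj m^-1 g1)) = wconj k (wedgeV (lconj h m) g).
  by rewrite /wconj /=; congr [:: (_, (_, _))]; rewrite /g1 /k /lcomm; gnorm.
have E5 : wedge m h ++ wedgeV (lconj h m) g =e= wconj k (wedgeV (lconj h m) g) ++ wedge m h.
  by apply: ext_wedge_peifferw; rewrite // ext_word_wedgeV; apply/andP; split; side.
have E6 : wedge m g ++ wconj g (wedge m h) =e= wedge m h ++ wedge (lconj h m) g.
  transitivity (wedge m (g * h)).
    by symmetry; apply: (@ext_wedgeMr _ _ g h); side.
  by apply: (@ext_wedgeMr _ _ h (h^-1 * g * h)); side.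
have E7 : wedgeV (lconj h m) g =e= wconj g (wedgeV m h) ++ wedgeV m g ++ wedge m h.
  have := ext_winv (ext_move_l (ext_sym E6)).
  by rewrite !winv_cat !winvK -wconj_winv -!catA.
have E8 : wconj k (wedgeV (lconj h m) g) =e= wedge m h ++ wedgeV (lconj h m) g ++ wedgeV m h.
  by rewrite catA E5 -catA ext_wedgeV_r cats0.
rewrite E1 E2 (ext_wconj _ E3) ?E4 ?E8 ?E7; last by side.
by rewrite -!catA (catA (wedge m h) (wedgeV m h)) ext_wedgeV_r cat0s ext_wedgeV_l cats0.
Qed.

Lemma ext_wconj_wedge n m h : n \in N -> m \in N -> h \in G ->
  wconj n (wedge m h) =e= wedge n (lcomm m h) ++ wedge m h.
Proof.
move=> nN mN hG; apply: (@ext_cancel_r (wedgeV m h)).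
rewrite -catA ext_wedgeV_r cats0 (ext_wedge_swap nN) ?lcommN //.
have nG : n \in G by side.
rewrite -[wedgeV (lcomm m h) n]/(winv (wedge (lcomm m h) n)).
by rewrite (ext_winv (ext_wedge_lcomml mN hG nG)) winv_cat -wconj_winv.
Qed.

Lemma ext_wconj_wedgeV n m h : n \in N -> m \in N -> h \in G ->
  wconj n (wedgeV m h) =e= wedge n (lcomm m h)^-1 ++ wedgeV m h.
Proof.
move=> nN mN hG; set k := lcomm m h.
rewrite -[wedgeV _ _]/(winv (wedge m h)) wconj_winv (ext_winv (ext_wconj_wedge nN mN hG)).
rewrite winv_cat.
have E1 : [::] =e= wedge n k ++ wconj k (wedge n k^-1).
  by rewrite -(ext_wedgeg1 nN); apply: (@ext_wedgeMr _ _ k k^-1); side.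
have E2 : wconj k (wedge n k^-1) =e= wedge m h ++ wedge n k^-1 ++ wedgeV m h.
  have Nw : ext_word N G (wedge n k^-1) by rewrite ext_word_wedge; apply/andP; split; side.
  by rewrite catA (ext_wedge_peifferw mN hG Nw) -catA ext_wedgeV_r cats0.
rewrite E2 in E1; apply: (@ext_cancel_l (wedge n k ++ wedge m h)).
by rewrite -!catA (catA (wedge m h) (winv _)) ext_winv_r cat0s ext_winv_r -E1.
Qed.

Lemma ext_wconjN n w : n \in N -> ext_word N G w ->
  wconj n w =e= wedge n (wcomm w) ++ w.
Proof.
move=> nN; elim: w => [|[b [m h]] w IHw]; first by rewrite /wcomm big_nil ext_wedgeg1.
case/andP=> /andP[mN hG] Nw; rewrite /= in mN hG.
set l := (b, (m, h)); set c := wcomm [:: l].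
have Nl : ext_word N G [:: l] by rewrite /ext_word /= mN hG.
have El : wconj n [:: l] =e= wedge n c ++ [:: l].
  rewrite /c /wcomm big_seq1 /l; clear c l Nl.
  by case: b => /=; [apply: ext_wconj_wedgeV | apply: ext_wconj_wedge].
rewrite -[l :: w]cat1s wconj_cat El IHw // wcomm_cat -/c -catA (catA [:: l]).
have Nnw : ext_word N G (wedge n (wcomm w)) by rewrite ext_word_wedge nN /=; side.
rewrite (ext_peiffer Nl Nnw).
rewrite !catA; do 2 apply: ext_cat_proper => //; symmetry.
by apply: (@ext_wedgeMr _ _ c (wcomm w)); rewrite /c; side.
Qed.

Lemma ext_catC u v : ext_word N G u -> ext_word N G v ->
  v ++ u =e= wedge (wcomm v) (wcomm u) ++ u ++ v.
Proof.
by move=> Nu Nv; rewrite (ext_peiffer Nv Nu) (ext_wconjN _ Nu) -?catA //; side.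
Qed.

(* ext_ctx also inserts letters outside N x G; wproj erases them. *)
Definition wproj w : word gT := [seq l <- w | (l.2.1 \in N) && (l.2.2 \in G)].

Lemma wproj_cat u v : wproj (u ++ v) = wproj u ++ wproj v.
Proof. exact: filter_cat. Qed.

Lemma wproj_id w : ext_word N G w -> wproj w = w.
Proof. exact: all_filterP. Qed.

Lemma ext_wproj u v : u =e= v -> wproj u =e= wproj v.
Proof.
elim=> {u v} //.
- by move=> u v _ E; symmetry.
- by move=> u v w _ E1 _ E2; rewrite E1 E2.
- by move=> a b u v _ E; rewrite !wproj_cat E.
- move=> [b [n g]]; rewrite /wproj /=; case: (_ && _) => //=.
  exact: (ext_cancel _ _ (b, (n, g))).
- move=> n n' g nN n'N gG; rewrite !wproj_id; first exact: ext_rel1.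
    by rewrite /ext_word /= !andbT; repeat (apply/andP; split); side.
  by rewrite /ext_word /= !andbT; repeat (apply/andP; split); side.
- move=> n g g' nN gG g'G; rewrite !wproj_id; first exact: ext_rel2.
    by rewrite /ext_word /= !andbT; repeat (apply/andP; split); side.
  by rewrite /ext_word /= !andbT; repeat (apply/andP; split); side.
- move=> x xN; rewrite wproj_id; first exact: ext_diag.
  by rewrite /ext_word /= !andbT; repeat (apply/andP; split); side.
Qed.

(* N /\ G modulo the normal subgroup generated by the symbols b /\ g, b in B. *)
Inductive ext_eq_mod (B : {set gT}) : word gT -> word gT -> Prop :=
  | ext_mod_ext u v : u =e= v -> ext_eq_mod B u v
  | ext_mod_kill c g : c \in B -> g \in G -> ext_eq_mod B (wedge c g) [::]
  | ext_mod_sym u v : ext_eq_mod B u v -> ext_eq_mod B v u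
  | ext_mod_trans u v w : ext_eq_mod B u v -> ext_eq_mod B v w -> ext_eq_mod B u w
  | ext_mod_ctx a b u v : ext_eq_mod B u v -> ext_eq_mod B (a ++ u ++ b) (a ++ v ++ b).

Local Notation "u =e= v %[mod B ]" := (ext_eq_mod B u v) (at level 70, v at next level).

Section Modulo.
Variable B : {group gT}.
Hypotheses (nBG : B <| G) (sBN : B \subset N).

#[local] Instance ext_eq_mod_equiv : Equivalence (ext_eq_mod B).
Proof.
split; [move=> u; apply: ext_mod_ext | exact: ext_mod_sym | exact: ext_mod_trans].
exact: ext_refl.
Qed.

#[local] Hint Extern 0 (ext_eq_mod _ _ _) => reflexivity : core.

#[local] Instance ext_mod_cat_proper :
  Proper (ext_eq_mod B ==> ext_eq_mod B ==> ext_eq_mod B) (@cat (letter gT)).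
Proof.
move=> u u' Eu v v' Ev; transitivity (u' ++ v); first exact: (ext_mod_ctx [::] v Eu).
by have := ext_mod_ctx u' [::] Ev; rewrite !cats0.
Qed.

#[local] Instance ext_mod_subrel : subrelation (ext_eq N G) (ext_eq_mod B).
Proof. by move=> u v; apply: ext_mod_ext. Qed.

Lemma ext_mod_winv u v : u =e= v %[mod B] -> winv u =e= winv v %[mod B].
Proof.
move=> E; transitivity (winv u ++ (v ++ winv v)).
  by apply: ext_mod_ext; rewrite ext_winv_r cats0.
transitivity (winv u ++ (u ++ winv v)).
  by apply: ext_mod_cat_proper => //; apply: ext_mod_cat_proper => //; symmetry.
by apply: ext_mod_ext; rewrite catA ext_winv_l.
Qed.

Lemma ext_mod_wpow u v k : u =e= v %[mod B] -> wpow u k =e= wpow v k %[mod B].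
Proof. by move=> E; elim: k => // k IHk; rewrite !wpowS; apply: ext_mod_cat_proper. Qed.

#[local] Instance ext_mod_wpow_proper :
  Proper (ext_eq_mod B ==> eq ==> ext_eq_mod B) (@wpow gT).
Proof. by move=> u v E k _ <-; apply: ext_mod_wpow. Qed.

Lemma ext_mod_wconj x u v : x \in G -> u =e= v %[mod B] -> wconj x u =e= wconj x v %[mod B].
Proof.
move=> xG; elim=> {u v}.
- by move=> u v E; apply/ext_mod_ext/ext_wconj.
- move=> c g cB gG; apply: ext_mod_kill; last by side.
  by apply: mem_lconj cB; rewrite (subsetP (normal_norm nBG)).
- by move=> u v _ E; symmetry.
- by move=> u v w _ E1 _ E2; rewrite E1 E2.
- by move=> a b u v _ E; rewrite !wconj_cat E.
Qed.

Lemma ext_mod_wedgeV c g : c \in B -> g \in G -> wedgeV c g =e= [::] %[mod B].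
Proof. by move=> cB gG; apply: (ext_mod_winv (ext_mod_kill cB gG)). Qed.

Lemma ext_mod_wproj u v : u =e= v %[mod B] ->
  exists2 l, ext_word B G l & wproj u =e= l ++ wproj v.
Proof.
elim=> {u v}.
- by move=> u v E; exists [::]; last exact: ext_wproj.
- move=> c g cB gG; exists (wedge c g); first by rewrite ext_word_wedge cB.
  by rewrite cats0 wproj_id // ext_word_wedge gG (subsetP sBN).
- move=> u v _ [l Bl E]; exists (winv l); first by rewrite ext_word_winv.
  by rewrite E catA ext_winv_l.
- move=> u v w _ [l1 Bl1 E1] _ [l2 Bl2 E2]; exists (l1 ++ l2).
    by rewrite ext_word_cat Bl1.
  by rewrite E1 E2 catA.
- move=> a b u v _ [l Bl E].
  have Na : ext_word N G (wproj a) by apply/allP=> x; rewrite mem_filter => /andP[].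
  have Nl : ext_word N G l := ext_wordS sBN Bl.
  exists (wconj (wcomm (wproj a)) l).
    by apply: ext_word_wconj; rewrite ?(subsetP (normal_norm nBG)) ?(subsetP (normG G)); side.
  by rewrite !wproj_cat E -!catA catA (ext_peiffer Na Nl) -!catA.
Qed.

Lemma ext_mod_nil w : ext_word N G w -> w =e= [::] %[mod B] ->
  exists2 l, ext_word B G l & w =e= l.
Proof. by move=> Nw /ext_mod_wproj[l Bl]; rewrite wproj_id // cats0; exists l. Qed.

Lemma ext_mod_wconj_wedge c n g : c \in B -> n \in N -> g \in G ->
  wconj c (wedge n g) =e= wedge n g %[mod B].
Proof.
move=> cB nN gG; have cN := subsetP sBN c cB.
have c'B : lconj n^-1 c \in B.
  by apply: mem_lconj cB; rewrite (subsetP (normal_norm nBG)) //; side.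
have E1 : wedge (c * n) g =e= wconj c (wedge n g) ++ wedge c g.
  by apply: (@ext_wedgeMl _ c n); side.
have E2 : wedge (c * n) g =e= wedge c (lconj n g) ++ wedge n g.
  by apply: (@ext_wedgeMl _ n (lconj n^-1 c)); side.
transitivity (wconj c (wedge n g) ++ wedge c g); first by rewrite (ext_mod_kill cB gG) cats0.
apply: ext_mod_trans (ext_mod_ext _ (ext_trans (ext_sym E1) E2)) _.
by rewrite (@ext_mod_kill _ c (lconj n g)) //; side.
Qed.

Lemma ext_mod_wconjB c w : c \in B -> ext_word N G w -> wconj c w =e= w %[mod B].
Proof.
move=> cB; elim: w => [|[b [n g]] w IHw] // /andP[/andP[nN gG] Nw]; rewrite /= in nN gG.
rewrite -[_ :: w]cat1s wconj_cat IHw //; apply: ext_mod_cat_proper => //.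
case: b; last exact: ext_mod_wconj_wedge.
rewrite -[[:: (true, _)]]/(winv (wedge n g)) wconj_winv.
exact/ext_mod_winv/ext_mod_wconj_wedge.
Qed.

Lemma ext_mod_commute_wpow s u k : s ++ u =e= u ++ s %[mod B] ->
  s ++ wpow u k =e= wpow u k ++ s %[mod B].
Proof.
move=> E; elim: k => [|k IHk]; first by rewrite cats0.
by rewrite wpowS catA E -catA IHk catA.
Qed.

Lemma ext_mod_wpow_class2 u v s k : v ++ u =e= s ++ u ++ v %[mod B] ->
  s ++ u =e= u ++ s %[mod B] -> s ++ v =e= v ++ s %[mod B] ->
  wpow (u ++ v) k =e= wpow s 'C(k, 2) ++ wpow u k ++ wpow v k %[mod B].
Proof.
move=> Evu Esu Esv.
have Evju j : wpow v j ++ u =e= wpow s j ++ u ++ wpow v j %[mod B].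
  elim: j => [|j IHj]; first by rewrite cats0.
  have Evs : wpow v j ++ s =e= s ++ wpow v j %[mod B] by symmetry; apply: ext_mod_commute_wpow.
  by rewrite wpowSr -catA Evu !catA Evs -!catA (catA (wpow v j) u) IHj -!catA.
elim: k => [|k IHk] //.
rewrite wpowSr IHk binS bin1 wpowD !wpowSr -!catA; apply: ext_mod_cat_proper => //.
rewrite (catA (wpow v k) u) Evju -!catA catA.
have Eus : wpow u k ++ wpow s k =e= wpow s k ++ wpow u k %[mod B].
  by apply: ext_mod_commute_wpow; symmetry; apply: ext_mod_commute_wpow.
by rewrite Eus -!catA.
Qed.

Section PowerQuotient.
Variables (A : {group gT}) (p : nat).
Hypotheses (nAG : A <| G) (sAN : A \subset N) (p_odd : odd p).
Hypotheses (expA : forall a, a \in A -> a ^+ p \in B)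
           (lcommA : forall a b, a \in A -> b \in A -> lcomm a b \in B).

Let inAN a : a \in A -> a \in N := subsetP sAN a.
Let lcommAG a g : a \in A -> g \in G -> lcomm a g \in A.
Proof. by move=> aA gG; apply: mem_lcomm aA (subsetP (normal_norm nAG) g gG). Qed.

Lemma ext_mod_wconj_wedge_self a b : a \in A -> b \in A ->
  wconj a (wedge a b) =e= wedge a b %[mod B].
Proof.
move=> aA bA; have aN := inAN aA; have bG := inNG (inAN bA).
rewrite (ext_wconj_wedge aN aN bG) (ext_wedge_swap aN (lcommN aN bG)).
by rewrite (ext_mod_wedgeV (lcommA aA bA) (inNG aN)).
Qed.

Lemma ext_mod_wedgeXl a b j : a \in A -> b \in A ->
  wedge (a ^+ j) b =e= wpow (wedge a b) j %[mod B].
Proof.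
move=> aA bA; have aN := inAN aA; have bG := inNG (inAN bA).
elim: j => [|j IHj]; first by rewrite ext_wedge1g.
have E : wedge (a ^+ j.+1) b =e= wconj a (wedge (a ^+ j) b) ++ wedge a b.
  by apply: (@ext_wedgeMl _ a (a ^+ j)); rewrite ?expgS; side.
rewrite E (ext_mod_wconj (inNG aN) IHj) wconj_wpow (ext_mod_wconj_wedge_self aA bA).
by rewrite -wpowSr.
Qed.

Lemma ext_mod_wedgeA_expp a b : a \in A -> b \in A ->
  wpow (wedge a b) p =e= [::] %[mod B].
Proof.
move=> aA bA; rewrite -(ext_mod_wedgeXl _ aA bA).
by apply: ext_mod_kill; [apply: expA | apply/inNG/inAN].
Qed.

Lemma ext_mod_wedge_lcomm_commute a g : a \in A -> g \in G ->
  wedge a (lcomm a g) ++ wedge a g =e= wedge a g ++ wedge a (lcomm a g) %[mod B].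
Proof.
move=> aA gG; have aN := inAN aA; set k := lcomm a g.
have kA : k \in A by apply: lcommAG.
have kN := inAN kA; have kG := inNG kN.
symmetry; rewrite (ext_peiffer (w := wedge a k)) ?ext_word_wedge ?aN ?gG ?kG //.
rewrite wcomm_wedge; apply: ext_mod_cat_proper => //.
have -> : wconj (lcomm a g) (wedge a k) = wedge (lconj k a) k.
  by rewrite /wconj /=; congr [:: (_, (_, _))]; rewrite /k /lcomm; gnorm.
have E : wedge (lconj k a) k =e= wconj (lcomm k a) (wedge a k) ++ wedge (lcomm k a) k.
  by apply: (@ext_wedgeMl _ (lcomm k a) a); rewrite /lcomm; side.
rewrite E (ext_mod_kill (lcommA kA aA) kG) cats0.
by apply: ext_mod_wconj_wedge; rewrite ?lcommA.
Qed.

Lemma ext_mod_wedgeXl_class2 a g j : a \in A -> g \in G ->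
  wedge (a ^+ j) g =e= wpow (wedge a (lcomm a g)) 'C(j, 2) ++ wpow (wedge a g) j %[mod B].
Proof.
move=> aA gG; have aN := inAN aA; set k := lcomm a g.
have kA : k \in A by apply: lcommAG.
elim: j => [|j IHj]; first by rewrite ext_wedge1g.
have E : wedge (a ^+ j.+1) g =e= wconj a (wedge (a ^+ j) g) ++ wedge a g.
  by apply: (@ext_wedgeMl _ a (a ^+ j)); rewrite ?expgS; side.
rewrite E (ext_mod_wconj (inNG aN) IHj) wconj_cat !wconj_wpow (ext_mod_wconj_wedge_self aA kA).
rewrite (ext_wconj_wedge aN aN gG) -/k.
rewrite (@ext_mod_wpow_class2 (wedge a k) (wedge a g) [::]) ?wpow_nil ?cats0 //;
  last by rewrite ext_mod_wedge_lcomm_commute.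
by rewrite binS bin1 wpowD wpowSr -!catA.
Qed.

Lemma ext_mod_wedge_expp a g : a \in A -> g \in G ->
  wpow (wedge a g) p =e= [::] %[mod B].
Proof.
move=> aA gG; have := ext_mod_wedgeXl_class2 p aA gG.
rewrite ext_mod_kill ?expA // bin2odd // wpowM ext_mod_wedgeA_expp ?lcommAG // wpow_nil.
by rewrite cat0s => E; symmetry.
Qed.

Lemma ext_mod_wedge_central a b u : a \in A -> b \in A -> ext_word N G u ->
  wedge a b ++ u =e= u ++ wedge a b %[mod B].
Proof.
move=> aA bA Nu; have Nab : ext_word N G (wedge a b).
  by rewrite ext_word_wedge inAN ?inNG ?inAN.
rewrite (ext_peiffer Nab Nu) wcomm_wedge; apply: ext_mod_cat_proper => //.
exact/ext_mod_wconjB/Nu/lcommA.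
Qed.

Lemma ext_mod_wpow_expp w : ext_word A G w -> wpow w p =e= [::] %[mod B].
Proof.
elim: w => [|l w IHw]; first by rewrite wpow_nil.
case/andP=> Al Aw; have {}Al : ext_word A G [:: l] by rewrite /ext_word /= Al.
have [Nl Nw] := (ext_wordS sAN Al, ext_wordS sAN Aw).
have [klA kwA] := (mem_wcomm (normal_norm nAG) Al, mem_wcomm (normal_norm nAG) Aw).
rewrite -cat1s (ext_mod_wpow_class2 _ (ext_mod_ext _ (ext_catC Nl Nw))
  (ext_mod_wedge_central kwA klA Nl) (ext_mod_wedge_central kwA klA Nw)).
rewrite bin2odd // wpowM ext_mod_wedgeA_expp // wpow_nil IHw // cats0 cat0s.
case: l Al {Nl klA} => -[] [m h] /andP[/andP[mA hG] _]; last exact: ext_mod_wedge_expp.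
rewrite -[[:: (true, _)]]/(winv (wedge m h)) -winv_wpow.
by apply: (ext_mod_winv (v := [::])); apply: ext_mod_wedge_expp.
Qed.

End PowerQuotient.

End Modulo.

Lemma ext_wpow u v k : u =e= v -> wpow u k =e= wpow v k.
Proof. by move=> E; elim: k => // k IHk; rewrite !wpowS; apply: ext_cat_proper. Qed.

Lemma ext_word1 w : ext_word 1 G w -> w =e= [::].
Proof.
elim: w => [|[b [n g]] w IHw] // /andP[/andP[/set1P /= -> gG] /IHw{}IHw].
rewrite -cat1s IHw cats0; case: b; last exact: ext_wedge1g.
by apply: (ext_winv (u := wedge 1 g) (v := [::])); apply: ext_wedge1g.
Qed.

Section PowerfulExponent.
Variable p : nat.
Hypotheses (p_odd : odd p) (pG : p.-group G) (powN : powerful p N).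

Let pN : p.-group N := pgroupS sNG pG.

Lemma ext_wpow_ppow_series w i : ext_word N G w ->
  exists2 l, ext_word (ppow_series p N i) G l & wpow w (p ^ i) =e= l.
Proof.
move=> Nw; elim: i => [|i [l Nil El]]; first by exists w; rewrite ?expn0 ?wpowS ?cats0.
set A := ppow_series p N i; set B := ppow_series p N i.+1.
have [nAG nBG] := (ppow_series_normal p i nNG, ppow_series_normal p i.+1 nNG).
have [sAN sBN] := (ppow_series_sub p N i, ppow_series_sub p N i.+1).
have powA : powerful p A := ppow_series_powerful p_odd pN powN i.
have expA a : a \in A -> a ^+ p \in B by apply: mem_ppow.
have lcommA a b : a \in A -> b \in A -> lcomm a b \in B.
  move=> aA bA; have -> : lcomm a b = [~ a^-1, b^-1].
    by rewrite /lcomm /commg /conjg !invgK !mulgA.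
  by apply: (subsetP powA); rewrite mem_commg ?groupV.
have Nl : ext_word N G (wpow l p) by apply/ext_word_wpow/(ext_wordS sAN).
have Ep := ext_mod_wpow_expp nBG sBN nAG sAN p_odd expA lcommA Nil.
have [l' Bl' El'] := ext_mod_nil nBG sBN Nl Ep.
by exists l' => //; rewrite expnSr wpowM (ext_wpow _ El) El'.
Qed.

Lemma ext_wpow_exponent w : ext_word N G w -> wpow w (exponent N) =e= [::].
Proof.
move=> Nw; have [l Nkl El] := ext_wpow_ppow_series (logn p (exponent N)) Nw.
rewrite -[exponent N](part_pnat_id (pi := p)) ?pnat_exponent // p_part El.
by apply: ext_word1; rewrite -(ppow_series_exponent p_odd pN powN).
Qed.

End PowerfulExponent.

End ExteriorRelations.

Theorem theorem4p5 (p : nat) (gT : finGroupType) (G N : {group gT}) :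
  prime p -> odd p -> p.-group G -> N <| G -> powerful p N ->
  ext_exp_dvd N G (exponent N).
Proof.
(* The argument never uses that p is prime. *)
by move=> _ p_odd pG nNG powN w; apply: (ext_wpow_exponent nNG p_odd pG powN).
Qed.
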